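(* Let $q\ge2$ and $0<\delta\le\frac{q-1}{q}$. Then $$\lim_{n\to\infty}\frac{\log_q A_q(n,2\delta n)}{n}\ge 1-(1+\delta)H_q\!\left(\frac{\delta}{1+\delta}\right)+\delta\log_q(q-1)-H_q(\delta).$$
   Context: $\Sigma_q$ is an alphabet of size $q$. The insdel distance $d(\mathbf a,\mathbf b)$ is the minimum number of single-symbol insertions and deletions needed to transform $\mathbf a$ into $\mathbf b$. The minimum insdel distance of $\mathcal{C}\subseteq\Sigma_q^n$ is the minimum of $d(\mathbf a,\mathbf b)$ over distinct $\mathbf a,\mathbf b\in\mathcal{C}$. $A_q(n,d)$ is the maximum cardinality of a code $\mathcal{C}\subseteq\Sigma_q^n$ with minimum insdel distance at least $d$. $H_q(x)=x\log_q(q-1)-x\log_qx-(1-x)\log_q(1-x)$ for $0<x<1$, $H_q(0)=H_q(1)=0$. *)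

From HB Require Import structures.
From mathcomp Require Import all_boot all_order all_algebra.
From mathcomp Require Import all_classical all_reals all_analysis.
Set Implicit Arguments. Unset Strict Implicit. Unset Printing Implicit Defensive.
Import Order.TTheory GRing.Theory Num.Theory.
Local Open Scope ring_scope.

Definition insdel_step (T : Type) (a c : seq T) : Prop :=
  (exists (i : nat) (x : T), c = take i a ++ x :: drop i a) \/
  (exists (i : nat) (x : T), a = take i c ++ x :: drop i c).

Fixpoint insdel_reach (T : Type) (k : nat) (a b : seq T) : Prop :=
  match k with
  | 0 => a = b
  | k'.+1 => exists c, insdel_reach k' a c /\ insdel_step c b
  end.

Lemma insdel_reach_nil (T : Type) (b : seq T) : insdel_reach (size b) [::] b.
Proof.
elim: b => [//|y b IH] /=; exists b; split => //.
by left; exists 0%N, y; rewrite take0 drop0.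
Qed.

Lemma insdel_reach_cons (T : Type) k (x : T) (a b : seq T) :
  insdel_reach k a b -> insdel_reach k.+1 (x :: a) b.
Proof.
elim: k b => [|k IH] b /=.
  move=> ->; exists (x :: b); split => //.
  by right; exists 0%N, x; rewrite take0 drop0.
by case=> c [Hc Hs]; exists c; split => //; apply: IH.
Qed.

Lemma insdel_reach_ex (T : Type) (a b : seq T) :
  exists k, insdel_reach k a b.
Proof.
exists (size a + size b)%N; elim: a => [|x a IH] /=.
  exact: insdel_reach_nil.
by apply: insdel_reach_cons.
Qed.

Lemma insdel_reach_exb (T : Type) (a b : seq T) :
  exists k, (fun k => `[< insdel_reach k a b >]) k.
Proof. by case: (insdel_reach_ex a b) => k Hk; exists k; apply/asboolP. Qed.

Definition insdel_dist (T : Type) (a b : seq T) : nat :=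
  ex_minn (insdel_reach_exb a b).

Definition min_insdel_dist_ge (R : realType) (q n : nat)
    (C : {set n.-tuple 'I_q}) (d : R) : bool :=
  [forall a in C, forall b in C,
     (a != b) ==> (d <= (insdel_dist (tval a) (tval b))%:R)].

Definition A_insdel (R : realType) (q n : nat) (d : R) : nat :=
  \max_(C : {set n.-tuple 'I_q} | min_insdel_dist_ge C d) #|C|.

Definition logq (R : realType) (q : nat) (x : R) : R := ln x / ln q%:R.

Definition Hq (R : realType) (q : nat) (x : R) : R :=
  if (0 < x) && (x < 1) then
    x * logq q (q%:R - 1) - x * logq q x - (1 - x) * logq q (1 - x)
  else 0.

(* A Gilbert-Varshamov argument.  Let r = floor(delta n).  Two words at insdel
   distance below 2 delta n share a subsequence of length n - r, so the balls
   B(c) of words sharing such a subsequence with c, for c in a code of maximum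
   size, cover all q^n words.  A ball is bounded by C(n, r) choices of the
   subsequence times the number of length-n supersequences of a word of length
   n - r; weighting both counts by (1 - delta)^(n-r) delta^r gives
     q^n ((1 - delta)^(n-r) delta^r)^2 <= A_q(n, 2 delta n) (q - 1)^r.
   Taking logarithms yields the rate 1 + delta log_q(q-1) - 2 H_q(delta), which
   dominates the stated bound because (1 + delta) H_q(delta/(1 + delta)) >= H_q(delta). *)

From HB Require Import structures.
From mathcomp Require Import all_boot all_order all_algebra.
From mathcomp Require Import all_classical all_reals all_analysis.
From mathcomp Require Import zify ring lra.
Import Order.TTheory GRing.Theory Num.Theory.
Set Implicit Arguments. Unset Strict Implicit. Unset Printing Implicit Defensive.

Section SubseqCounts.
Variable T : finType.

Lemma big_tuple_cons m (F : m.+1.-tuple T -> nat) :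
  \sum_(t : m.+1.-tuple T) F t =
  \sum_(x : T) \sum_(t : m.-tuple T) F [tuple of x :: t].
Proof.
rewrite pair_big /= (reindex (fun p : T * m.-tuple T => [tuple of p.1 :: p.2])) //=.
exists (fun t : m.+1.-tuple T => (thead t, [tuple of behead t])) => [[x t] _|t _] /=.
  by congr (_, _); apply: val_inj.
by rewrite [RHS]tuple_eta.
Qed.

Definition nsupseq n (u : seq T) := \sum_(b : n.-tuple T) subseq u b.

Definition nsubseq m (a : seq T) := \sum_(s : m.-tuple T) subseq s a.

Lemma nsupseq_nil n : nsupseq n [::] = #|T| ^ n.
Proof.
rewrite /nsupseq (eq_bigr (fun=> 1)) => [|b _]; last by rewrite sub0seq.
by rewrite sum_nat_const card_tuple muln1.
Qed.

Lemma nsupseq_cons n x u :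
  nsupseq n.+1 (x :: u) = nsupseq n u + #|T|.-1 * nsupseq n (x :: u).
Proof.
rewrite /nsupseq big_tuple_cons (bigD1 x) //=; congr (_ + _).
  by apply: eq_bigr => t _; rewrite eqxx.
rewrite (eq_bigr (fun=> \sum_(t : n.-tuple T) subseq (x :: u) t)).
  by rewrite sum_nat_const cardC1.
by move=> y /negbTE yx; apply: eq_bigr => t _ /=; rewrite eq_sym yx.
Qed.

Lemma nsupseq_eq0 n u : n < size u -> nsupseq n u = 0.
Proof.
move=> nu; rewrite /nsupseq big1 // => b _; apply/eqP; rewrite eqb0.
by apply: contraTN nu => /size_subseq; rewrite size_tuple -leqNgt.
Qed.

Lemma nsubseq0 a : nsubseq 0 a = 1.
Proof.
rewrite /nsubseq (eq_bigr (fun=> 1)) => [|s _]; last first.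
  by rewrite (size0nil (size_tuple s)) sub0seq.
by rewrite sum_nat_const card_tuple expn0.
Qed.

Lemma nsubseq_nil m : nsubseq m.+1 [::] = 0.
Proof. by rewrite /nsubseq big1 // => s _; rewrite subseq0 -size_eq0 size_tuple. Qed.

Lemma nsubseq_cons m x a : nsubseq m.+1 (x :: a) <= nsubseq m a + nsubseq m.+1 a.
Proof.
rewrite /nsubseq [X in X <= _]big_tuple_cons (bigD1 x) //= leq_add //.
  by apply: leq_sum => t _; rewrite eqxx.
rewrite [X in _ <= X]big_tuple_cons [X in _ <= X](bigD1 x) //=.
rewrite -[X in X <= _]add0n leq_add //.
by apply: leq_sum => y /negbTE yx; rewrite yx.
Qed.

Lemma nsubseq_le_bin m a : nsubseq m a <= 'C(size a, m).
Proof.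
elim: a m => [|x a IH] [|m]; rewrite ?nsubseq0 ?nsubseq_nil ?bin0 //=.
by rewrite binS addnC (leq_trans (nsubseq_cons _ _ _)) // leq_add.
Qed.

Local Open Scope ring_scope.

Lemma nsupseq_weighted_le (R : realFieldType) (p : R) n u :
  0 <= p <= 1 -> p * #|T|%:R <= #|T|%:R - 1 -> (size u <= n)%N ->
  (nsupseq n u)%:R * ((1 - p) ^+ size u * p ^+ (n - size u))
    <= (#|T|%:R - 1) ^+ (n - size u).
Proof.
move=> /andP[p0 p1] pT.
have predTE : (#|T|.-1)%:R = #|T|%:R - 1 :> R.
  case: #|T| pT => [|t] pT; last by rewrite mulrSr addrK.
  by move: pT; rewrite mulr0 sub0r ler0N1.
set Q := #|T|%:R - 1 in pT predTE *.
have Q0 : 0 <= Q by apply: le_trans pT; rewrite mulr_ge0.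
have q1 : 0 <= 1 - p by rewrite subr_ge0.
elim: n u => [|n IH] [|x u] //= un.
- by rewrite nsupseq_nil !expr0 !mulr1.
- rewrite nsupseq_nil subn0 expr0 mul1r natrX -exprMn.
  by apply: lerXn2r; rewrite ?nnegrE ?mulr_ge0 // mulrC.
rewrite nsupseq_cons natrD natrM predTE subSS.
have IH1 := IH u un.
have [lt_un|ge_un] := ltnP (size u) n.
- have IH2 := IH (x :: u) lt_un; rewrite /= in IH2.
  rewrite -(subnSK lt_un) in IH1 *; set k := (n - (size u).+1)%N in IH1 IH2 *.
  (* The weights turn the recursion nsupseq_cons into a convex combination. *)
  have -> : Q ^+ k.+1 = (1 - p) * Q ^+ k.+1 + p * Q * Q ^+ k by rewrite exprS; ring.
  have -> : ((nsupseq n u)%:R + Q * (nsupseq n (x :: u))%:R)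
              * ((1 - p) ^+ (size u).+1 * p ^+ k.+1)
          = (1 - p) * ((nsupseq n u)%:R * ((1 - p) ^+ size u * p ^+ k.+1))
            + p * Q * ((nsupseq n (x :: u))%:R * ((1 - p) ^+ (size u).+1 * p ^+ k)).
    by rewrite !exprS; ring.
  by apply: lerD; apply: ler_wpM2l; rewrite ?mulr_ge0.
- have su : size u = n by apply/eqP; rewrite eqn_leq -ltnS un ge_un.
  rewrite (@nsupseq_eq0 n (x :: u)) /= ?su // mulr0 addr0.
  rewrite su subnn in IH1 *.
  rewrite (_ : _ * _ = (1 - p) * ((nsupseq n u)%:R * ((1 - p) ^+ n * p ^+ 0))).
    by apply: le_trans (ler_wpM2l q1 IH1) _; rewrite expr0 mulr1; lra.
  by rewrite exprS; ring.
Qed.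

Lemma bin_weighted_le1 (R : realFieldType) (p : R) n k : 0 <= p <= 1 ->
  'C(n, k)%:R * ((1 - p) ^+ (n - k) * p ^+ k) <= 1.
Proof.
move=> /andP[p0 p1]; have [kn|nk] := leqP k n; last by rewrite bin_small ?mul0r.
apply: (@le_trans _ _ ((1 - p + p) ^+ n)); last by rewrite subrK expr1n.
rewrite [X in _ <= X]exprDn (bigD1 (Ordinal (kn : (k < n.+1)%N))) //= mulr_natl lerDl.
by apply: sumr_ge0 => i _; rewrite mulrn_wge0 // mulr_ge0 // exprn_ge0 // subr_ge0.
Qed.

End SubseqCounts.

Section InsDel.
Variable T : eqType.
Implicit Types a b c s u v : seq T.

Lemma subseq_insert c i x : subseq c (take i c ++ x :: drop i c).
Proof. by rewrite -{1}(cat_take_drop i c) cat_subseq // subseq_cons. Qed.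

Lemma subseq_delete s u v x : subseq s (u ++ x :: v) ->
  exists s', [/\ subseq s' s, subseq s' (u ++ v) & size s <= (size s').+1].
Proof.
elim: u s => [|y u IH] [|z s] zs; try by exists [::]; rewrite !sub0seq.
- rewrite /= in zs; case: (z =P x) zs => _ sv.
    by exists s; split; rewrite ?subseq_cons.
  by exists (z :: s); split; rewrite ?subseq_refl.
- rewrite /= in zs; case: (z =P y) zs => [->|_] /IH[s' [s's s'uv sz]].
    by exists (y :: s'); rewrite /= !eqxx.
  by exists s'; split=> //; apply: subseq_trans s'uv (subseq_cons _ y).
Qed.

Lemma insdel_reach_common_subseq k a b : insdel_reach k a b ->
  exists s, [/\ subseq s a, subseq s b & size a + size b <= k + 2 * size s].
Proof.
elim: k b => [|k IH] b /=; first by move=> <-; exists a; split=> //; lia.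
case=> c [/IH[s [sa sc Hs]] [[i [x ->]]|[i [x Ec]]]].
  exists s; split=> //; first exact: subseq_trans sc (subseq_insert _ _ _).
  move: Hs; rewrite size_cat /= size_take size_drop.
  by case: (ltnP i (size c)); lia.
move: sc; rewrite Ec => /subseq_delete[s' [s's s'b sz]].
rewrite cat_take_drop in s'b.
exists s'; split=> //; first exact: subseq_trans s's sa.
by move: Hs; rewrite Ec !size_cat /= -{3}(cat_take_drop i b) size_cat; lia.
Qed.

End InsDel.

Lemma insdel_reach_dist (T : Type) (a b : seq T) :
  insdel_reach (insdel_dist a b) a b.
Proof. by rewrite /insdel_dist; case: ex_minnP => k /asboolP. Qed.

Section SubseqBall.
Variables (T : finType) (n r : nat).
Implicit Types a b : n.-tuple T.

Definition subseq_ball (a : n.-tuple T) : {set n.-tuple T} :=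
  [set b : n.-tuple T | [exists s : (n - r).-tuple T, subseq s a && subseq s b]].

Lemma subseq_ball_refl a : a \in subseq_ball a.
Proof.
rewrite inE; apply/existsP.
have sz : size (take (n - r) a) == n - r by rewrite size_takel ?size_tuple ?leq_subr.
by exists (Tuple sz); rewrite /= take_subseq.
Qed.

Lemma subseq_ball_sym a b : (b \in subseq_ball a) = (a \in subseq_ball b).
Proof. by rewrite !inE; apply: eq_existsb => s; rewrite andbC. Qed.

Lemma subseq_ball_insdel a b : insdel_dist a b < 2 * r.+1 -> b \in subseq_ball a.
Proof.
move=> ab; have [s [sa sb]] := insdel_reach_common_subseq (insdel_reach_dist a b).
rewrite !size_tuple => sz.
have sz' : size (drop (size s - (n - r)) s) == n - r by rewrite size_drop; lia.
have ss : subseq (drop (size s - (n - r)) s) s by apply: drop_subseq.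
rewrite inE; apply/existsP; exists (Tuple sz') => /=.
by rewrite (subseq_trans ss sa) (subseq_trans ss sb).
Qed.

Lemma card_subseq_ball a :
  #|subseq_ball a| <= \sum_(s : (n - r).-tuple T) subseq s a * nsupseq n s.
Proof.
rewrite -sum1_card (big_mkcond (mem (subseq_ball a))) /= /nsupseq.
rewrite (eq_bigr (fun s : (n - r).-tuple T =>
    \sum_(b : n.-tuple T) subseq s a * subseq s b)).
  rewrite exchange_big /=; apply: leq_sum => b _.
  case: ifP => // /[!inE] /existsP[s /andP[sa sb]].
  by rewrite (bigD1 s) //= sa sb.
by move=> s _; rewrite big_distrr.
Qed.

Local Open Scope ring_scope.

Lemma card_subseq_ball_weighted (R : realFieldType) (p : R) a :
  (r <= n)%N -> 0 <= p <= 1 -> p * #|T|%:R <= #|T|%:R - 1 ->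
  #|subseq_ball a|%:R * ((1 - p) ^+ (n - r) * p ^+ r) ^+ 2 <= (#|T|%:R - 1) ^+ r.
Proof.
move=> rn p01 pT; case/andP: (p01) => p0 p1.
set w := (1 - p) ^+ (n - r) * p ^+ r; set Q := #|T|%:R - 1.
have w0 : 0 <= w by rewrite mulr_ge0 ?exprn_ge0 ?subr_ge0.
have Q0 : 0 <= Q by apply: le_trans pT; rewrite mulr_ge0.
have ball_w : #|subseq_ball a|%:R * w <= 'C(n, r)%:R * Q ^+ r.
  have := card_subseq_ball a; rewrite -(ler_nat R) => /(ler_wpM2r w0) /le_trans; apply.
  rewrite natr_sum mulr_suml.
  apply: le_trans (_ : \sum_(s : (n - r).-tuple T) (subseq s a)%:R * Q ^+ r <= _).
    apply: ler_sum => s _; rewrite natrM -mulrA ler_wpM2l //.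
    have := nsupseq_weighted_le (n := n) (u := s) p01 pT.
    by rewrite size_tuple subKn //; apply; apply: leq_subr.
  rewrite -mulr_suml -natr_sum ler_wpM2r ?exprn_ge0 // ler_nat.
  by rewrite -(bin_sub rn); have := nsubseq_le_bin (n - r) a; rewrite size_tuple.
rewrite expr2 mulrA; apply: le_trans (ler_wpM2r w0 ball_w) _.
rewrite mulrAC -[X in _ <= X]mul1r ler_wpM2r ?exprn_ge0 //.
exact: bin_weighted_le1.
Qed.

End SubseqBall.

Section GilbertVarshamov.
Variables (R : realType) (q n : nat) (d : R).
Implicit Types (a b w : n.-tuple 'I_q) (C : {set n.-tuple 'I_q}).

Lemma min_insdel_dist_geU1 C w : min_insdel_dist_ge C d ->
  (forall c, c \in C -> d <= (insdel_dist c w)%:R /\ d <= (insdel_dist w c)%:R)%R ->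
  min_insdel_dist_ge (w |: C) d.
Proof.
move=> /forall_inP codeC far.
apply/forall_inP => a /setU1P[-> | aC]; apply/forall_inP => b /setU1P[-> | bC];
  apply/implyP => ab.
- by rewrite eqxx in ab.
- exact: (far b bC).2.
- exact: (far a aC).1.
- by move/forall_inP: (codeC a aC) => /(_ b bC) /implyP; apply.
Qed.

Lemma A_insdel_covering (B : n.-tuple 'I_q -> {set n.-tuple 'I_q}) :
  (forall a, a \in B a) -> (forall a b, (b \in B a) = (a \in B b)) ->
  (forall a b, (insdel_dist a b)%:R < d -> b \in B a)%R ->
  q ^ n <= A_insdel q n d * \max_a #|B a|.
Proof.
move=> Brefl Bsym Bdist.
pose code := [pred C : {set n.-tuple 'I_q} | min_insdel_dist_ge C d].
have code0 : code finset.set0 by apply/forall_inP => a; rewrite inE.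
have [|C codeC AE] := @eq_bigmax_cond _ code (fun C => #|C|).
  by apply/card_gt0P; exists finset.set0.
rewrite /A_insdel AE.
have cover w : exists2 c, c \in C & w \in B c.
  apply/exists_inP; apply: contraT; rewrite negb_exists_in => /forall_inP farC.
  have wC : w \notin C by apply/negP => wC; have := farC w wC; rewrite Brefl.
  have codeU : code (w |: C).
    apply: min_insdel_dist_geU1 codeC _ => c cC.
    rewrite !leNgt; split; apply/negP => /Bdist; last rewrite Bsym; exact/negP/farC.
  by have := @leq_bigmax_cond _ code (fun C => #|C|) _ codeU; rewrite AE cardsU1 wC ltnn.
have -> : q ^ n = \sum_(w : n.-tuple 'I_q) 1 by rewrite sum1_card card_tuple card_ord.
apply: (@leq_trans (\sum_(w : n.-tuple 'I_q) \sum_(c in C) (w \in B c))).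
  by apply: leq_sum => w _; have [c cC wc] := cover w; rewrite (bigD1 c) //= wc.
rewrite exchange_big -sum_nat_const; apply: leq_sum => c _.
apply: leq_trans (leq_bigmax c); rewrite -sum1_card.
by rewrite [X in _ <= X]big_mkcond; apply: leq_sum => w _; case: (w \in B c).
Qed.

End GilbertVarshamov.

Local Open Scope ring_scope.

Lemma ler_mul_dist1 (R : realDomainType) (x y z : R) :
  `|x - y| <= 1 -> x * z <= y * z + `|z|.
Proof.
move=> xy; rewrite -lerBlDl -mulrBl; apply: le_trans (ler_norm _) _.
by rewrite normrM ler_piMl.
Qed.

Lemma subr1_le_mul_ln (R : realType) (x : R) : 0 < x -> x - 1 <= x * ln x.
Proof.
move=> x0; have xV0 : 0 < x^-1 by rewrite invr_gt0.
have := @le_ln1Dx R (x^-1 - 1); rewrite addrCA subrr addr0 lnV ?posrE //.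
move=> /(_ ltac:(lra)) /(ler_wpM2l (ltW x0)).
by rewrite mulrBr mulfV ?gt_eqF // mulr1 mulrN; lra.
Qed.

Lemma ln_mul_logq (R : realType) q (x : R) : (1 < q)%N -> ln q%:R * logq q x = ln x.
Proof. by move=> q1; rewrite /logq mulrC divfK // gt_eqF // ln_gt0 // ltr1n. Qed.

Lemma ln_mul_Hq (R : realType) q (x : R) : (1 < q)%N -> 0 < x < 1 ->
  ln q%:R * Hq q x = x * ln (q%:R - 1) - x * ln x - (1 - x) * ln (1 - x).
Proof.
move=> q1 x01; rewrite /Hq x01 /logq; field.
by rewrite gt_eqF // ln_gt0 // ltr1n.
Qed.

Lemma Hq_le_mul_Hq (R : realType) q (x : R) : (1 < q)%N -> 0 < x < 1 ->
  Hq q x <= (1 + x) * Hq q (x / (1 + x)).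
Proof.
move=> q1 x01; case/andP: (x01) => x0 x1.
have lq : 0 < ln q%:R :> R by rewrite ln_gt0 // ltr1n.
have x'01 : 0 < x / (1 + x) < 1 by rewrite divr_gt0 ?ltr_pdivrMr /=; lra.
rewrite -(ler_pM2l lq) mulrCA !ln_mul_Hq // ln_div ?posrE; try lra.
have -> : 1 - x / (1 + x) = (1 + x)^-1 by field; lra.
rewrite lnV ?posrE; last lra.
have -> : (1 + x) * (x / (1 + x) * ln (q%:R - 1) - x / (1 + x) * (ln x - ln (1 + x))
            - (1 + x)^-1 * - ln (1 + x))
        = x * ln (q%:R - 1) - x * ln x + (1 + x) * ln (1 + x) by field; lra.
have := subr1_le_mul_ln (_ : 0 < 1 + x); have := subr1_le_mul_ln (_ : 0 < 1 - x).
lra.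
Qed.

Section LimnEinf.
Local Open Scope classical_set_scope.
Local Open Scope ereal_scope.

Lemma limn_einf_ge_cvg (R : realType) (u v : (\bar R)^nat) (l : \bar R) :
  v @ \oo --> l -> (\forall n \near \oo, v n <= u n) -> l <= limn_einf u.
Proof.
move=> vl [N _ vuN]; rewrite -(cvg_limn_einf_sup vl).1 !limn_einf_lim.
apply: lee_lim; [exact: is_cvg_einfs | exact: is_cvg_einfs |].
near=> n; apply: le_ereal_inf_tmp => _ [k /= nk <-].
apply: (@le_trans _ _ (v k)); first by apply: ereal_inf_lbound; exists k.
by apply: vuN; apply: leq_trans nk; near: n; exists N.
Unshelve. all: by end_near.
Qed.

End LimnEinf.

Definition insdel_gv_rate (R : realType) q (delta : R) :=
  1 + delta * logq q (q%:R - 1) - 2 * Hq q delta.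

Section RateBound.
Variables (R : realType) (q : nat) (delta : R).
Hypotheses (q2 : (2 <= q)%N) (delta_gt0 : 0 < delta)
  (delta_le : delta <= (q%:R - 1) / q%:R).

Lemma delta_mulq_le : delta * q%:R <= q%:R - 1.
Proof. by rewrite -ler_pdivlMr // ltr0n (leq_trans _ q2). Qed.

Lemma delta_lt1 : delta < 1.
Proof.
apply: le_lt_trans delta_le _; rewrite ltr_pdivrMr ?ltr0n ?(leq_trans _ q2) //.
lra.
Qed.

Lemma A_insdel_weighted_ge n r : (r <= n)%N -> delta * n%:R < r.+1%:R ->
  q%:R ^+ n * ((1 - delta) ^+ (n - r) * delta ^+ r) ^+ 2
    <= (A_insdel q n (2 * delta * n%:R))%:R * (q%:R - 1) ^+ r.
Proof.
move=> rn dnr.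
have [|a0 maxE] := @bigop.eq_bigmax _ (fun a : n.-tuple 'I_q => #|subseq_ball r a|).
  by rewrite card_tuple card_ord expn_gt0 (leq_trans _ q2).
have cover : (q ^ n <= A_insdel q n (2 * delta * n%:R) * #|subseq_ball r a0|)%N.
  rewrite -maxE; apply: A_insdel_covering => [a|a b|a b ab].
  - exact: subseq_ball_refl.
  - exact: subseq_ball_sym.
  apply: subseq_ball_insdel; rewrite -(ltr_nat R) natrM; apply: lt_trans ab _.
  by rewrite -mulrA ltr_pM2l.
have d01 : 0 <= delta <= 1 by rewrite ltW //= ltW // delta_lt1.
have := card_subseq_ball_weighted a0 rn d01.
rewrite card_ord => /(_ delta_mulq_le) ball.
rewrite -(ler_nat R) natrM natrX in cover.
apply: le_trans (ler_wpM2r _ cover) _.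
  by rewrite exprn_ge0 // mulr_ge0 ?exprn_ge0 ?subr_ge0 ?ltW // delta_lt1.
by rewrite -mulrA ler_wpM2l.
Qed.

Lemma ln_A_insdel_ge n :
  n%:R * (ln q%:R * insdel_gv_rate q delta)
    - `|ln (q%:R - 1) + 2 * (ln (1 - delta) - ln delta)|
  <= ln (A_insdel q n (2 * delta * n%:R))%:R.
Proof.
set r := Num.truncn (delta * n%:R).
set W := ln (q%:R - 1) + 2 * _.
have dn0 : 0 <= delta * n%:R by rewrite mulr_ge0 // ltW.
have r_le : r%:R <= delta * n%:R by rewrite truncn_le.
have r_gt : delta * n%:R < r.+1%:R by apply: truncnS_gt.
have rn : (r <= n)%N.
  rewrite -(ler_nat R); apply: le_trans r_le _.
  by rewrite ler_piMl // ltW // delta_lt1.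
have hw := A_insdel_weighted_ge rn r_gt; set A := A_insdel _ _ _ in hw *.
have q0 : 0 < q%:R :> R by rewrite ltr0n (leq_trans _ q2).
have Q0 : 0 < q%:R - 1 :> R by rewrite subr_gt0 ltr1n.
have d1 : 0 < 1 - delta by rewrite subr_gt0 delta_lt1.
have d01 : 0 < delta < 1 by rewrite delta_gt0 delta_lt1.
have w0 : 0 < (1 - delta) ^+ (n - r) * delta ^+ r by rewrite mulr_gt0 ?exprn_gt0.
have A0 : 0 < A%:R :> R.
  rewrite ltr0n lt0n; apply: contraTneq hw => ->.
  by rewrite mul0r -ltNge mulr_gt0 ?exprn_gt0.
rewrite -ler_ln ?posrE ?mulr_gt0 ?exprn_gt0 // in hw.
rewrite !lnM ?posrE ?mulr_gt0 ?exprn_gt0 // !lnXn // in hw.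
rewrite -!(mulr_natl (ln _)) natrB // in hw.
have rateE : ln q%:R * insdel_gv_rate q delta = ln q%:R + delta * ln (q%:R - 1)
    - 2 * (delta * ln (q%:R - 1) - delta * ln delta - (1 - delta) * ln (1 - delta)).
  by rewrite -(ln_mul_Hq q2 d01) -(ln_mul_logq (q%:R - 1) q2) /insdel_gv_rate; ring.
have rW : r%:R * W <= delta * n%:R * W + `|W|.
  by apply: ler_mul_dist1; rewrite ler_norml; move: r_gt; rewrite -natr1; lra.
rewrite rateE; rewrite /W in rW; lra.
Qed.

Lemma logq_A_insdel_ge n : (0 < n)%N ->
  insdel_gv_rate q delta
    - `|ln (q%:R - 1) + 2 * (ln (1 - delta) - ln delta)| / ln q%:R / n%:R
  <= logq q (A_insdel q n (2 * delta * n%:R))%:R / n%:R.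
Proof.
move=> n0; have lq : 0 < ln q%:R :> R by rewrite ln_gt0 // ltr1n.
have n0' : 0 < n%:R :> R by rewrite ltr0n.
apply: le_trans (_ : (n%:R * (ln q%:R * insdel_gv_rate q delta)
    - `|ln (q%:R - 1) + 2 * (ln (1 - delta) - ln delta)|) / ln q%:R / n%:R <= _).
  by rewrite le_eqVlt; apply/orP; left; apply/eqP; field; rewrite !gt_eqF.
by rewrite /logq !ler_pM2r ?invr_gt0 // ln_A_insdel_ge.
Qed.

End RateBound.

Theorem mainTheorem17 (R : realType) (q : nat) (delta : R) :
  (2 <= q)%N -> 0 < delta -> delta <= (q%:R - 1) / q%:R ->
  ((1 - (1 + delta) * Hq q (delta / (1 + delta))
      + delta * logq q (q%:R - 1) - Hq q delta)%:E
   <= limn_einf (fun n : nat =>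
        (logq q (A_insdel q n (2 * delta * n%:R))%:R / n%:R)%:E))%E.
Proof.
move=> q2 d0 dq.
have d01 : 0 < delta < 1 by rewrite d0 (delta_lt1 q2 dq).
set C := `|ln (q%:R - 1) + 2 * (ln (1 - delta) - ln delta)| / ln q%:R.
apply: (@le_trans _ _ (insdel_gv_rate q delta)%:E).
  by rewrite lee_fin /insdel_gv_rate; have := Hq_le_mul_Hq q2 d01; lra.
apply: (@limn_einf_ge_cvg _ _ (fun n => (insdel_gv_rate q delta - C / n%:R)%:E)).
  rewrite -cvg_shiftS; apply: cvg_EFin; first exact: nearW.
  rewrite -[X in (_ --> X)%classic]subr0 -(mulr0 C); apply: cvgB; first exact: cvg_cst.
  exact: cvgMl_tmp cvg_harmonic.
by near=> n; rewrite lee_fin; apply: logq_A_insdel_ge; near: n; exists 1%N.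
Unshelve. all: by end_near.
Qed.
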